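(* Let $(\Gamma,\rho)$ be a weakly connected voltage graph with finite voltage group $G$, with local groups $\{G_i\}$ and directed local groups $\{G_i^*\}$. Then: (1) If $\Gamma$ is strongly connected, then $G_i^*=G_i$ for every vertex $v_i$. (2) If vertices $v_i,v_j$ are mutually reachable, then for any walk $w_{ij}$ from $v_i$ to $v_j$, $G_j^*=f(w_{ij})^{-1}\cdot G_i^*\cdot f(w_{ij})$.
   Context: $\Gamma=(V,E)$ simple digraph, $e_{ij}$ the edge $v_i\to v_j$, $\rho:E\to G$. Semi-walk $w=v_{i_1}a_1\dots a_{n-1}v_{i_n}$ with each $a_j\in\{e_{i_ji_{j+1}},e_{i_{j+1}i_j}\}$; walk if all $a_j=e_{i_ji_{j+1}}$; closed if $v_{i_1}=v_{i_n}$; path: walk with distinct vertices. Weakly connected: any two vertices joined by a semi-walk; strongly connected: every ordered pair of distinct vertices joined by a path; $v_i,v_j$ mutually reachable: there is a path from $v_i$ to $v_j$ and one from $v_j$ to $v_i$. Net voltage $f(w)=\bar\rho(a_1)\cdots\bar\rho(a_{n-1})$ with $\bar\rho(a_j)=\rho(a_j)$ for forward and $\rho(a_j)^{-1}$ for backward edges ($f=\mathbf 1$ on a single vertex). $G_i=\{f(w): w$ closed semi-walk at $v_i\}$, $G_i^*=\{f(w): w$ closed walk at $v_i\}$. *)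

From mathcomp Require Import all_boot all_fingroup.
Set Implicit Arguments. Unset Strict Implicit. Unset Printing Implicit Defensive.

Local Open Scope group_scope.

(* A simple digraph on a finite vertex type T is an irreflexive relation
   e : rel T ; e x y means the edge x -> y exists.  A voltage assignment is
   rho : T -> T -> gT, only its values on edges matter. *)

(* A semi-walk from x is encoded by the list of its steps (y, b): the next
   vertex y and b = true if the edge is traversed forward (x -> y), b = false
   if traversed backward (the edge y -> x). *)
Definition step_ok (T : finType) (e : rel T) (x : T) (s : T * bool) : bool :=
  if s.2 then e x s.1 else e s.1 x.

Fixpoint semiwalk (T : finType) (e : rel T) (x : T) (p : seq (T * bool)) : bool :=
  match p with
  | [::] => true
  | s :: p' => step_ok e x s && semiwalk e s.1 p'
  end.

Definition sw_end (T : finType) (x : T) (p : seq (T * bool)) : T :=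
  last x (map fst p).

Definition is_walk (T : finType) (e : rel T) (x : T) (p : seq (T * bool)) : bool :=
  semiwalk e x p && all snd p.

Definition is_path (T : finType) (e : rel T) (x : T) (p : seq (T * bool)) : bool :=
  is_walk e x p && uniq (x :: map fst p).

Fixpoint net_voltage (T : finType) (gT : finGroupType) (rho : T -> T -> gT)
    (x : T) (p : seq (T * bool)) : gT :=
  match p with
  | [::] => 1
  | s :: p' => (if s.2 then rho x s.1 else (rho s.1 x)^-1) * net_voltage rho s.1 p'
  end.

Definition weakly_connected (T : finType) (e : rel T) : Prop :=
  forall x y : T, exists p, semiwalk e x p /\ sw_end x p = y.

Definition strongly_connected (T : finType) (e : rel T) : Prop :=
  forall x y : T, x <> y -> exists p, is_path e x p /\ sw_end x p = y.

Definition mutually_reachable (T : finType) (e : rel T) (x y : T) : Prop :=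
  (exists p, is_path e x p /\ sw_end x p = y) /\
  (exists p, is_path e y p /\ sw_end y p = x).

Definition local_group (T : finType) (gT : finGroupType) (e : rel T)
    (rho : T -> T -> gT) (x : T) : gT -> Prop :=
  fun g => exists p, [/\ semiwalk e x p, sw_end x p = x & net_voltage rho x p = g].

Definition dlocal_group (T : finType) (gT : finGroupType) (e : rel T)
    (rho : T -> T -> gT) (x : T) : gT -> Prop :=
  fun g => exists p, [/\ is_walk e x p, sw_end x p = x & net_voltage rho x p = g].

(* Walk voltages are closed under concatenation, and in a finite group they
   are also closed under inversion as soon as the walk can be closed up: if
   g is the voltage of a walk x -> y and h that of a walk y -> x, then
   g^-1 = h (g h)^(n-1) with n the order of g h, which is the voltage of a
   walk y -> x going n - 1 times around the closed walk.  Hence a backward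
   edge of a semi-walk can be replaced by a forward walk with the same
   voltage whenever its endpoints are mutually reachable, which gives (1);
   and conjugating by the walk x -> y and its "inverse" y -> x gives (2). *)
From mathcomp Require Import all_boot all_fingroup.
Set Implicit Arguments. Unset Strict Implicit. Unset Printing Implicit Defensive.
Local Open Scope group_scope.

Section WalkVoltage.
Variables (T : finType) (gT : finGroupType) (e : rel T) (rho : T -> T -> gT).

Lemma semiwalk_cat x p q :
  semiwalk e x (p ++ q) = semiwalk e x p && semiwalk e (sw_end x p) q.
Proof. by elim: p x => [|s p IHp] x //=; rewrite IHp andbA. Qed.

Lemma is_walk_cat x p q :
  is_walk e x (p ++ q) = is_walk e x p && is_walk e (sw_end x p) q.
Proof.
by rewrite /is_walk semiwalk_cat all_cat -!andbA; congr andb; rewrite andbCA.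
Qed.

Lemma sw_end_cat (x : T) (p q : seq (T * bool)) : sw_end x (p ++ q) = sw_end (sw_end x p) q.
Proof. by rewrite /sw_end map_cat last_cat. Qed.

Lemma net_voltage_cat x p q :
  net_voltage rho x (p ++ q) = net_voltage rho x p * net_voltage rho (sw_end x p) q.
Proof. by elim: p x => [|s p IHp] x /=; rewrite ?mul1g // IHp mulgA. Qed.

Definition walk_voltage (x y : T) (g : gT) : Prop :=
  exists p, [/\ is_walk e x p, sw_end x p = y & net_voltage rho x p = g].

Lemma dlocal_groupE x : dlocal_group e rho x =1 walk_voltage x x.
Proof. by []. Qed.

Lemma walk_voltage_nil x : walk_voltage x x 1.
Proof. by exists [::]. Qed.

Lemma walk_voltage_edge x y : e x y -> walk_voltage x y (rho x y).
Proof.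
by move=> exy; exists [:: (y, true)]; rewrite /is_walk /= /step_ok /= exy mulg1.
Qed.

Lemma walk_voltage_path x p :
  is_path e x p -> walk_voltage x (sw_end x p) (net_voltage rho x p).
Proof. by case/andP=> walk_p _; exists p. Qed.

Lemma walk_voltage_cat x y z g h :
  walk_voltage x y g -> walk_voltage y z h -> walk_voltage x z (g * h).
Proof.
move=> [p [walk_p <- <-]] [q [walk_q <- <-]]; exists (p ++ q).
by rewrite is_walk_cat walk_p walk_q sw_end_cat net_voltage_cat.
Qed.

Lemma walk_voltage_expg x g n : walk_voltage x x g -> walk_voltage x x (g ^+ n).
Proof.
move=> Wg; elim: n => [|n IHn]; first exact: walk_voltage_nil.
by rewrite expgS; apply: walk_voltage_cat Wg IHn.
Qed.

Lemma walk_voltage_inv x y g h :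
  walk_voltage x y g -> walk_voltage y x h -> walk_voltage y x g^-1.
Proof.
move=> Wg Wh.
have Wloop := walk_voltage_expg #[g * h].-1 (walk_voltage_cat Wg Wh).
have inv_gh : (g * h) ^+ #[g * h].-1 = (g * h)^-1.
  apply: (mulgI (g * h)); rewrite mulgV -expgS prednK ?order_gt0 //.
  exact: expg_order.
have := walk_voltage_cat Wh Wloop.
by rewrite inv_gh invMg mulgA mulgV mul1g.
Qed.

Lemma walk_voltage_semiwalk x p :
  (forall y z, e z y -> exists h, walk_voltage y z h) ->
  semiwalk e x p -> walk_voltage x (sw_end x p) (net_voltage rho x p).
Proof.
move=> back; elim: p x => [|[y b] p IHp] x /=; first by move=> _; exact: walk_voltage_nil.
rewrite /step_ok /= => /andP [step_xy sw_p].
apply: walk_voltage_cat (IHp _ sw_p).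
case: b step_xy => [|eyx]; first exact: walk_voltage_edge.
have [h Wh] := back x y eyx.
exact: walk_voltage_inv (walk_voltage_edge eyx) Wh.
Qed.

Lemma walk_voltage_conj x y a b :
  walk_voltage x y a -> walk_voltage y x b ->
  forall g, walk_voltage y y g <->
    exists2 h, walk_voltage x x h & g = a^-1 * h * a.
Proof.
move=> Wa Wb; have Wa' := walk_voltage_inv Wa Wb.
move=> g; split=> [Wg | [h Wh ->]].
  exists (a * g * a^-1); last by rewrite !mulgA mulVg mul1g mulgKV.
  exact: walk_voltage_cat (walk_voltage_cat Wa Wg) Wa'.
exact: walk_voltage_cat (walk_voltage_cat Wa' Wh) Wa.
Qed.

End WalkVoltage.

Lemma strongly_connected_walk_back (T : finType) (gT : finGroupType) (e : rel T)
    (rho : T -> T -> gT) :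
  irreflexive e -> strongly_connected e ->
  forall x y, e y x -> exists h, walk_voltage e rho x y h.
Proof.
move=> irr sc x y eyx.
have x_neq_y : x <> y by move=> exy; rewrite exy irr in eyx.
have [p [path_p <-]] := sc x y x_neq_y.
by exists (net_voltage rho x p); apply: walk_voltage_path.
Qed.

Theorem corollary2 (T : finType) (gT : finGroupType) (e : rel T)
    (rho : T -> T -> gT) :
  irreflexive e ->
  weakly_connected e ->
  (strongly_connected e ->
     forall (x : T) (g : gT), dlocal_group e rho x g <-> local_group e rho x g)
  /\
  (forall x y : T, mutually_reachable e x y ->
     forall p, is_walk e x p -> sw_end x p = y ->
     forall g : gT, dlocal_group e rho y g <->
       exists2 h, dlocal_group e rho x h &
         g = (net_voltage rho x p)^-1 * h * net_voltage rho x p).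
Proof.
move=> irr _; split.
  move=> sc x g; split; first by move=> [p [/andP [sw_p _] ? ?]]; exists p.
  move=> [p [sw_p end_p <-]]; rewrite dlocal_groupE.
  have := walk_voltage_semiwalk (strongly_connected_walk_back rho irr sc) sw_p.
  by rewrite end_p.
move=> x y [_ [q [path_q end_q]]] p walk_p end_p.
have Wp : walk_voltage e rho x y (net_voltage rho x p) by exists p.
have := walk_voltage_path rho path_q; rewrite end_q => Wq.
exact: walk_voltage_conj Wp Wq.
Qed.
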